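(* Let $0<q<1$, let $n$ be a nonnegative integer, let $k$ be an integer with $0\le k\le n$, and let $x\in[0,1]$. Then $$B_{n-k,n}(1-x,q)=B_{k,n}(x,q),$$ and $$\sum_{k=0}^n B_{k,n}(x,q)=\bigl(1+[x]_q[1-x]_q(1-q)\bigr)^n=B_{n,q}(1:x),$$ where $B_{n,q}(1:x)$ denotes the modified $q$-Bernstein operator applied to the constant function $1$.
   Context: Let $q$ be a real number with $0<q<1$. For real $x$, the $q$-number is $[x]_q=\frac{1-q^x}{1-q}$. For a nonnegative integer $k$ and $x\in[0,1]$, the modified $q$-Bernstein polynomials $B_{k,n}(x,q)$, $n=0,1,2,\dots$, are defined by the generating function $$\frac{t^k e^{[1-x]_q t}[x]_q^k}{k!}=\sum_{n=0}^\infty B_{k,n}(x,q)\frac{t^n}{n!}.$$ For $f$ continuous on $[0,1]$, the modified $q$-Bernstein operator is $B_{n,q}(f:x)=\sum_{j=0}^n f\left(\frac{j}{n}\right)B_{j,n}(x,q)$ for $x\in[0,1]$. *)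

From HB Require Import structures.
From mathcomp Require Import all_boot all_order all_algebra.
From mathcomp Require Import all_classical all_reals all_analysis.
Set Implicit Arguments. Unset Strict Implicit. Unset Printing Implicit Defensive.
Import Order.TTheory GRing.Theory Num.Theory.
Local Open Scope ring_scope.

Definition qnum (R : realType) (q x : R) : R := (1 - q `^ x) / (1 - q).

(* Coefficient sequence (in t^m) of the formal power series t^k [x]_q^k / k! *)
Definition lead_coef_seq (R : realType) (q x : R) (k m : nat) : R :=
  if m == k then (qnum q x) ^+ k / (k`!)%:R else 0.

(* Coefficient sequence (in t^m) of e^{a t} *)
Definition exp_coef_seq (R : realType) (a : R) (m : nat) : R := a ^+ m / (m`!)%:R.

(* B_{k,n}(x,q) := n! * [t^n] ( t^k e^{[1-x]_q t} [x]_q^k / k! ),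
   the t^n-coefficient computed as the Cauchy product of the two series. *)
Definition qBern (R : realType) (q : R) (k n : nat) (x : R) : R :=
  (n`!)%:R * \sum_(i < n.+1)
     lead_coef_seq q x k i * exp_coef_seq (qnum q (1 - x)) (n - i).

Definition qBernOp (R : realType) (q : R) (n : nat) (f : R -> R) (x : R) : R :=
  \sum_(j < n.+1) f (j%:R / n%:R) * qBern q j n x.

From HB Require Import structures.
From mathcomp Require Import all_boot all_order all_algebra.
From mathcomp Require Import all_classical all_reals all_analysis.
From mathcomp Require Import ring lra.
Import Order.TTheory GRing.Theory Num.Theory.
Local Open Scope ring_scope.

(* Only the term i = k of the Cauchy product survives, so
   B_{k,n}(x) = C(n,k) [x]^k [1-x]^(n-k).  This makes the symmetry x <-> 1-x
   evident, and the binomial theorem sums the B_{k,n}(x) to ([x] + [1-x])^n.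
   Finally q^x q^(1-x) = q gives [x] + [1-x] = 1 + (1-q) [x] [1-x]. *)

Lemma qBernE (R : realType) (q : R) (n k : nat) (x : R) : (k <= n)%N ->
  qBern q k n x = qnum q x ^+ k * qnum q (1 - x) ^+ (n - k) *+ 'C(n, k).
Proof.
move=> le_kn; rewrite /qBern (bigD1 (Ordinal (le_kn : (k < n.+1)%N))) //=.
rewrite big1 => [|i /eqP ne_ik]; last first.
  rewrite /lead_coef_seq; case: eqP => [eq_ik|_]; last by rewrite mul0r.
  by case: ne_ik; apply: val_inj.
rewrite addr0 /lead_coef_seq eqxx /exp_coef_seq.
rewrite -(bin_fact le_kn) !natrM -mulr_natr.
have fact_neq0 m : (m`!)%:R != 0 :> R by rewrite pnatr_eq0 -lt0n fact_gt0.
by field; rewrite !fact_neq0.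
Qed.

Lemma qBern_compl (R : realType) (q : R) (n k : nat) (x : R) : (k <= n)%N ->
  qBern q (n - k) n (1 - x) = qBern q k n x.
Proof.
move=> le_kn; rewrite !qBernE ?leq_subr // subKn // bin_sub // subKr.
by rewrite mulrC.
Qed.

Lemma sum_qBern (R : realType) (q : R) (n : nat) (x : R) :
  \sum_(k < n.+1) qBern q k n x = (qnum q (1 - x) + qnum q x) ^+ n.
Proof.
rewrite exprDn; apply: eq_bigr => k _.
by rewrite qBernE -1?ltnS // [X in X *+ _]mulrC.
Qed.

Lemma qnum_add_compl (R : realType) (q x : R) : 0 < q -> q != 1 ->
  qnum q (1 - x) + qnum q x = 1 + qnum q x * qnum q (1 - x) * (1 - q).
Proof.
move=> q_gt0 q_neq1.
have powR_compl : q `^ x * q `^ (1 - x) = q.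
  rewrite -powRD; last by rewrite (gt_eqF q_gt0) implybE orbT.
  by rewrite addrC subrK powRr1 ?ltW.
have q1_neq0 : 1 - q != 0 by rewrite subr_eq0 eq_sym.
rewrite /qnum; move: (q `^ x) (q `^ (1 - x)) powR_compl => a b <- in q1_neq0 *.
by field; rewrite q1_neq0.
Qed.

Lemma qBernOp1 (R : realType) (q : R) (n : nat) (x : R) :
  qBernOp q n (fun=> 1) x = \sum_(k < n.+1) qBern q k n x.
Proof. by apply: eq_bigr => k _; rewrite mul1r. Qed.

Theorem theorem3 (R : realType) (q : R) (n k : nat) (x : R) :
  0 < q < 1 -> (k <= n)%N -> 0 <= x <= 1 ->
  qBern q (n - k) n (1 - x) = qBern q k n x /\
  \sum_(j < n.+1) qBern q j n x = (1 + qnum q x * qnum q (1 - x) * (1 - q)) ^+ n /\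
  (1 + qnum q x * qnum q (1 - x) * (1 - q)) ^+ n = qBernOp q n (fun _ => 1) x.
Proof.
move=> /andP[q_gt0 q_lt1] le_kn _.
have sum_eq : \sum_(j < n.+1) qBern q j n x =
    (1 + qnum q x * qnum q (1 - x) * (1 - q)) ^+ n.
  by rewrite sum_qBern qnum_add_compl // lt_eqF.
by split; [exact: qBern_compl | split; rewrite // qBernOp1].
Qed.
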